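(* The path functor $P:\mathsf{RSRel}\to\mathsf{Met}$ is fully faithful and is left adjoint to the functor $Q:\mathsf{Met}\to\mathsf{RSRel}$.
   Context: $\mathsf{RSRel}$: objects are pairs $X=(|X|,\sim_X)$ of a set and a reflexive symmetric relation on it; morphisms are functions $f$ with $x\sim x'\Rightarrow f(x)\sim f(x')$. $\mathsf{Met}$: objects are extended pseudo-metric spaces $(|X|,d)$ with $d:|X|\times|X|\to[0,\infty]$, $d(x,x)=0$, symmetric, satisfying the triangle inequality; morphisms are non-expansive maps ($d(f(x),f(y))\le d(x,y)$). For $X\in\mathsf{RSRel}$, $PX$ is $|X|$ with the path metric: $d(x,x')$ is the least $k$ such that there are $x_0=x,x_1,\dots,x_k=x'$ with $x_i\sim x_{i+1}$ for all $i<k$, and $\infty$ if no such sequence exists; $P$ is the identity on morphisms. For $Y\in\mathsf{Met}$, $QY=(|Y|,\{(y,y'):d(y,y')\le1\})$, and $Q$ is the identity on morphisms. *)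

From Stdlib Require Import Reals Lra Lia Classical Wf_nat.
From Coquelicot Require Import Rbar Lub.
Open Scope R_scope.

Record RSRel := {
  rs_car :> Type;
  rs_rel : rs_car -> rs_car -> Prop;
  rs_refl : forall x, rs_rel x x;
  rs_sym : forall x y, rs_rel x y -> rs_rel y x }.

Definition RSHom (X Y : RSRel) : Type :=
  { f : X -> Y | forall x x', rs_rel X x x' -> rs_rel Y (f x) (f x') }.

Definition rs_id (X : RSRel) : RSHom X X := exist (fun f : X -> X => forall x x', rs_rel X x x' -> rs_rel X (f x) (f x'))
  (fun x => x) (fun _ _ h => h).

Definition rs_comp {X Y Z : RSRel} (g : RSHom Y Z) (f : RSHom X Y) : RSHom X Z :=
  exist (fun F : X -> Z => forall x x', rs_rel X x x' -> rs_rel Z (F x) (F x'))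
    (fun x => proj1_sig g (proj1_sig f x))
    (fun x x' h => proj2_sig g _ _ (proj2_sig f _ _ h)).

Record Met := {
  met_car :> Type;
  met_d : met_car -> met_car -> Rbar;
  met_nonneg : forall x y, Rbar_le (Finite 0) (met_d x y);
  met_refl : forall x, met_d x x = Finite 0;
  met_sym : forall x y, met_d x y = met_d y x;
  met_tri : forall x y z,
    Rbar_le (met_d x z) (Rbar_plus (met_d x y) (met_d y z)) }.

Definition MetHom (X Y : Met) : Type :=
  { f : X -> Y | forall x y, Rbar_le (met_d Y (f x) (f y)) (met_d X x y) }.

Definition met_id (X : Met) : MetHom X X :=
  exist (fun f : X -> X => forall x y, Rbar_le (met_d X (f x) (f y)) (met_d X x y))
    (fun x => x) (fun x y => Rbar_le_refl _).

Definition met_comp {X Y Z : Met} (g : MetHom Y Z) (f : MetHom X Y) : MetHom X Z :=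
  exist (fun F : X -> Z => forall x y, Rbar_le (met_d Z (F x) (F y)) (met_d X x y))
    (fun x => proj1_sig g (proj1_sig f x))
    (fun x y => Rbar_le_trans _ _ _ (proj2_sig g _ _) (proj2_sig f _ _)).

Definition walk (X : RSRel) (x x' : X) (k : nat) : Prop :=
  exists s : nat -> X, s 0%nat = x /\ s k = x' /\
    (forall i, (i < k)%nat -> rs_rel X (s i) (s (S i))).

(* d(x,x') = least k admitting such a sequence (infimum of the set of such k),
   and +oo if there is none (the infimum of the empty set is +oo). *)
Definition pathd (X : RSRel) (x x' : X) : Rbar :=
  Glb_Rbar (fun r => exists k, r = INR k /\ walk X x x' k).

Lemma walk_min (X : RSRel) (x y : X) :
  (exists k, walk X x y k) ->
  exists m, walk X x y m /\ forall k, walk X x y k -> (m <= k)%nat.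
Proof.
  intros H.
  destruct (dec_inh_nat_subset_has_unique_least_element (walk X x y)
              (fun n => classic _) H) as [m [[Hm Hl] _]].
  exists m; split; auto.
Qed.

Lemma pathd_min (X : RSRel) (x y : X) m :
  walk X x y m -> (forall k, walk X x y k -> (m <= k)%nat) ->
  pathd X x y = Finite (INR m).
Proof.
  intros Hm Hl. unfold pathd. apply is_glb_Rbar_unique. split.
  - intros r [k [-> Hk]]. simpl. apply le_INR. auto.
  - intros b Hb. apply Hb. exists m; auto.
Qed.

Lemma pathd_none (X : RSRel) (x y : X) :
  ~ (exists k, walk X x y k) -> pathd X x y = p_infty.
Proof.
  intros Hn. unfold pathd. apply is_glb_Rbar_unique. split.
  - intros r [k [_ Hk]]. exfalso; eauto.
  - intros b _. destruct b; simpl; auto.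
Qed.

Lemma walk_refl (X : RSRel) (x : X) : walk X x x 0.
Proof. exists (fun _ => x). repeat split; auto. intros; lia. Qed.

Lemma walk_sym (X : RSRel) (x y : X) k : walk X x y k -> walk X y x k.
Proof.
  intros [s [H0 [Hk Hs]]]. exists (fun i => s (k - i)%nat). repeat split.
  - rewrite Nat.sub_0_r; auto.
  - rewrite Nat.sub_diag; auto.
  - intros i Hi. apply rs_sym.
    replace (k - i)%nat with (S (k - S i)) by lia. apply Hs. lia.
Qed.

Lemma walk_cat (X : RSRel) (x y z : X) k1 k2 :
  walk X x y k1 -> walk X y z k2 -> walk X x z (k1 + k2).
Proof.
  intros [s [H0 [Hk Hs]]] [t [T0 [Tk Ht]]].
  exists (fun i => if Nat.leb i k1 then s i else t (i - k1)%nat). repeat split.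
  - simpl. auto.
  - destruct (Nat.leb (k1 + k2) k1) eqn:E.
    + apply Nat.leb_le in E. assert (k2 = 0%nat) by lia. subst.
      rewrite Nat.add_0_r. congruence.
    + replace (k1 + k2 - k1)%nat with k2 by lia. auto.
  - intros i Hi.
    destruct (Nat.leb i k1) eqn:E1; destruct (Nat.leb (S i) k1) eqn:E2.
    + apply Hs. apply Nat.leb_le in E2. lia.
    + apply Nat.leb_le in E1. apply Nat.leb_gt in E2.
      assert (i = k1) by lia. subst i. rewrite Hk, <- T0.
      replace (S k1 - k1)%nat with 1%nat by lia. apply (Ht 0%nat). lia.
    + apply Nat.leb_gt in E1. apply Nat.leb_le in E2. lia.
    + apply Nat.leb_gt in E1.
      replace (S i - k1)%nat with (S (i - k1)) by lia. apply Ht. lia.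
Qed.

Lemma walk_map (X Y : RSRel) (f : X -> Y)
  (hf : forall x x', rs_rel X x x' -> rs_rel Y (f x) (f x')) x y k :
  walk X x y k -> walk Y (f x) (f y) k.
Proof.
  intros [s [H0 [Hk Hs]]]. exists (fun i => f (s i)). repeat split; try congruence.
  intros i Hi. apply hf, Hs; auto.
Qed.

Lemma pathd_nonneg (X : RSRel) (x y : X) : Rbar_le (Finite 0) (pathd X x y).
Proof.
  destruct (classic (exists k, walk X x y k)) as [H|H].
  - destruct (walk_min X x y H) as [m [Hm Hl]]. rewrite (pathd_min X x y m Hm Hl).
    simpl. apply pos_INR.
  - rewrite pathd_none; simpl; auto.
Qed.

Lemma pathd_refl (X : RSRel) (x : X) : pathd X x x = Finite 0.
Proof.
  rewrite (pathd_min X x x 0%nat (walk_refl X x)); auto. intros; lia.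
Qed.

Lemma pathd_sym (X : RSRel) (x y : X) : pathd X x y = pathd X y x.
Proof.
  destruct (classic (exists k, walk X x y k)) as [H|H].
  - destruct (walk_min X x y H) as [m [Hm Hl]]. rewrite (pathd_min X x y m Hm Hl).
    symmetry. apply pathd_min.
    + apply walk_sym; auto.
    + intros k Hk. apply Hl, walk_sym; auto.
  - rewrite (pathd_none X x y H). symmetry. apply pathd_none.
    intros [k Hk]. apply H. exists k. apply walk_sym; auto.
Qed.

Lemma pathd_tri (X : RSRel) (x y z : X) :
  Rbar_le (pathd X x z) (Rbar_plus (pathd X x y) (pathd X y z)).
Proof.
  destruct (classic (exists k, walk X x y k)) as [H1|H1].
  - destruct (classic (exists k, walk X y z k)) as [H2|H2].
    + destruct (walk_min X x y H1) as [m1 [Hm1 Hl1]].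
      destruct (walk_min X y z H2) as [m2 [Hm2 Hl2]].
      rewrite (pathd_min X x y m1 Hm1 Hl1), (pathd_min X y z m2 Hm2 Hl2).
      assert (W : walk X x z (m1 + m2)) by (eapply walk_cat; eauto).
      destruct (walk_min X x z (ex_intro _ _ W)) as [m3 [Hm3 Hl3]].
      rewrite (pathd_min X x z m3 Hm3 Hl3). simpl.
      rewrite <- plus_INR. apply le_INR. auto.
    + rewrite (pathd_none X y z H2).
      pose proof (pathd_nonneg X x y).
      destruct (pathd X x y); simpl in *; try contradiction;
      destruct (pathd X x z); simpl; auto.
  - rewrite (pathd_none X x y H1).
    pose proof (pathd_nonneg X y z).
    destruct (pathd X y z); simpl in *; try contradiction;
    destruct (pathd X x z); simpl; auto.
Qed.

Definition P_obj (X : RSRel) : Met :=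
  {| met_car := rs_car X; met_d := pathd X;
     met_nonneg := pathd_nonneg X; met_refl := pathd_refl X;
     met_sym := pathd_sym X; met_tri := pathd_tri X |}.

Lemma rs_nonexpansive (X Y : RSRel) (f : RSHom X Y) :
  forall x y, Rbar_le (pathd Y (proj1_sig f x) (proj1_sig f y)) (pathd X x y).
Proof.
  intros x y.
  destruct (classic (exists k, walk X x y k)) as [H|H].
  - destruct (walk_min X x y H) as [m [Hm Hl]]. rewrite (pathd_min X x y m Hm Hl).
    pose proof (walk_map X Y _ (proj2_sig f) x y m Hm) as W.
    destruct (walk_min Y _ _ (ex_intro _ _ W)) as [m' [Hm' Hl']].
    rewrite (pathd_min Y _ _ m' Hm' Hl'). simpl. apply le_INR. auto.
  - rewrite (pathd_none X x y H). destruct (pathd Y _ _); simpl; auto.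
Qed.

Definition P_mor {X Y : RSRel} (f : RSHom X Y) : MetHom (P_obj X) (P_obj Y) :=
  exist (fun F : P_obj X -> P_obj Y =>
           forall x y, Rbar_le (met_d (P_obj Y) (F x) (F y)) (met_d (P_obj X) x y))
    (proj1_sig f) (rs_nonexpansive X Y f).

Definition Q_rel (Y : Met) (y y' : Y) : Prop := Rbar_le (met_d Y y y') (Finite 1).

Lemma Q_rel_refl (Y : Met) (y : Y) : Q_rel Y y y.
Proof. unfold Q_rel. rewrite met_refl. simpl. lra. Qed.

Lemma Q_rel_sym (Y : Met) (y y' : Y) : Q_rel Y y y' -> Q_rel Y y' y.
Proof. unfold Q_rel. rewrite met_sym. auto. Qed.

Definition Q_obj (Y : Met) : RSRel :=
  {| rs_car := met_car Y; rs_rel := Q_rel Y;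
     rs_refl := Q_rel_refl Y; rs_sym := Q_rel_sym Y |}.

Definition Q_mor {Y Y' : Met} (g : MetHom Y Y') : RSHom (Q_obj Y) (Q_obj Y') :=
  exist (fun F : Q_obj Y -> Q_obj Y' =>
           forall y y', rs_rel (Q_obj Y) y y' -> rs_rel (Q_obj Y') (F y) (F y'))
    (proj1_sig g) (fun y y' h => Rbar_le_trans _ _ _ (proj2_sig g y y') h).

From Stdlib Require Import Reals.
From Coquelicot Require Import Rbar.
From Stdlib Require Import Lia Classical ProofIrrelevance.

(* The path metric is the largest extended pseudometric on |X| in which
   related points are at distance at most 1, and in it two points are at
   distance at most 1 exactly when they are related.  Hence a map |X| -> |Y|
   is non-expansive PX -> Y iff it maps related points to points at distance
   at most 1, i.e. iff it is a morphism X -> QY; taking Y = PY, the morphisms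
   PX -> PY are exactly the morphisms X -> Y.  All hom-set bijections are
   thus the identity on underlying functions. *)

Lemma sig_ext {A : Type} {P : A -> Prop} (u v : sig P) :
  proj1_sig u = proj1_sig v -> u = v.
Proof. apply eq_sig_hprop. intros; apply proof_irrelevance. Qed.

Lemma pathd_le_walk (X : RSRel) (x y : X) (k : nat) :
  walk X x y k -> Rbar_le (pathd X x y) (INR k).
Proof.
  intros w. destruct (walk_min X x y (ex_intro _ k w)) as [m [wm m_min]].
  rewrite (pathd_min X x y m wm m_min). apply le_INR, m_min, w.
Qed.

Lemma pathd_le1_iff (X : RSRel) (x y : X) :
  Rbar_le (pathd X x y) 1 <-> rs_rel X x y.
Proof.
  split.
  - intros d_le1.
    destruct (classic (exists k, walk X x y k)) as [walks | no_walk].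
    2: { rewrite (pathd_none X x y no_walk) in d_le1. contradiction. }
    destruct (walk_min X x y walks) as [m [wm m_min]].
    rewrite (pathd_min X x y m wm m_min) in d_le1.
    assert (m_le1 : (m <= 1)%nat) by (apply INR_le; exact d_le1).
    destruct wm as [s [s0 [sm s_rel]]]. subst x y.
    destruct m as [|[|m]]; [apply rs_refl | apply s_rel; lia | lia].
  - intros xy. apply (pathd_le_walk X x y 1).
    exists (fun i => match i with 0%nat => x | _ => y end).
    repeat split. intros [|i] i_lt1; [exact xy | lia].
Qed.

Section PathMetricMaximal.

Variables (X : RSRel) (Y : Met) (F : X -> Y).
Hypothesis F_rel : forall x x', rs_rel X x x' -> Rbar_le (met_d Y (F x) (F x')) 1.

Lemma met_d_le_walk (x y : X) (k : nat) :
  walk X x y k -> Rbar_le (met_d Y (F x) (F y)) (INR k).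
Proof.
  intros [s [<- [<- s_rel]]].
  assert (d_le : forall i, (i <= k)%nat ->
            Rbar_le (met_d Y (F (s 0%nat)) (F (s i))) (INR i)).
  { induction i as [|i IHi]; intros Si_le.
    - rewrite met_refl. apply Rle_refl.
    - eapply Rbar_le_trans; [apply (met_tri Y _ (F (s i))) |].
      rewrite S_INR. apply (Rbar_plus_le_compat _ (INR i) _ 1).
      + apply IHi. lia.
      + apply F_rel, s_rel. lia. }
  apply d_le, le_n.
Qed.

Lemma met_d_le_pathd (x y : X) : Rbar_le (met_d Y (F x) (F y)) (pathd X x y).
Proof.
  destruct (classic (exists k, walk X x y k)) as [walks | no_walk].
  - destruct (walk_min X x y walks) as [m [wm m_min]].
    rewrite (pathd_min X x y m wm m_min). apply met_d_le_walk, wm.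
  - rewrite (pathd_none X x y no_walk). destruct (met_d Y (F x) (F y)); exact I.
Qed.

End PathMetricMaximal.

Lemma nonexpansive_pathd_iff (X : RSRel) (Y : Met) (F : X -> Y) :
  (forall x y, Rbar_le (met_d Y (F x) (F y)) (pathd X x y)) <->
  (forall x x', rs_rel X x x' -> Q_rel Y (F x) (F x')).
Proof.
  split.
  - intros F_nonexp x x' xx'. eapply Rbar_le_trans; [apply F_nonexp |].
    apply pathd_le1_iff, xx'.
  - apply met_d_le_pathd.
Qed.

Lemma P_mor_inj (X Y : RSRel) (f g : RSHom X Y) : P_mor f = P_mor g -> f = g.
Proof. intros fg. apply sig_ext, (f_equal (@proj1_sig _ _) fg). Qed.

Lemma P_mor_surj (X Y : RSRel) (h : MetHom (P_obj X) (P_obj Y)) :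
  exists f : RSHom X Y, P_mor f = h.
Proof.
  assert (h_rel : forall x x', rs_rel X x x' ->
                    rs_rel Y (proj1_sig h x) (proj1_sig h x')).
  { intros x x' xx'. apply pathd_le1_iff.
    exact (proj1 (nonexpansive_pathd_iff X (P_obj Y) _) (proj2_sig h) x x' xx'). }
  exists (exist _ (proj1_sig h) h_rel). apply sig_ext. reflexivity.
Qed.

Definition PQ_transpose (X : RSRel) (Y : Met) (f : MetHom (P_obj X) Y) :
  RSHom X (Q_obj Y) :=
  exist _ (proj1_sig f) (proj1 (nonexpansive_pathd_iff X Y _) (proj2_sig f)).

Lemma PQ_transpose_inj (X : RSRel) (Y : Met) (f g : MetHom (P_obj X) Y) :
  PQ_transpose X Y f = PQ_transpose X Y g -> f = g.
Proof. intros fg. apply sig_ext, (f_equal (@proj1_sig _ _) fg). Qed.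

Lemma PQ_transpose_surj (X : RSRel) (Y : Met) (h : RSHom X (Q_obj Y)) :
  exists f, PQ_transpose X Y f = h.
Proof.
  exists (exist _ (proj1_sig h) (proj2 (nonexpansive_pathd_iff X Y _) (proj2_sig h))).
  apply sig_ext. reflexivity.
Qed.

Lemma PQ_transpose_natural (X' X : RSRel) (Y Y' : Met)
  (h : RSHom X' X) (g : MetHom Y Y') (f : MetHom (P_obj X) Y) :
  PQ_transpose X' Y' (met_comp g (met_comp f (P_mor h)))
  = rs_comp (Q_mor g) (rs_comp (PQ_transpose X Y f) h).
Proof. apply sig_ext. reflexivity. Qed.

Theorem theorem5 :
  (* fully faithful: each map RSRel(X,Y) -> Met(PX,PY), f |-> P f, is bijective *)
  (forall (X Y : RSRel),
     (forall f g : RSHom X Y, P_mor f = P_mor g -> f = g) /\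
     (forall h : MetHom (P_obj X) (P_obj Y), exists f : RSHom X Y, P_mor f = h)) /\
  (* adjunction P -| Q *)
  (exists phi : forall (X : RSRel) (Y : Met), MetHom (P_obj X) Y -> RSHom X (Q_obj Y),
     (forall X Y,
        (forall f g, phi X Y f = phi X Y g -> f = g) /\
        (forall h : RSHom X (Q_obj Y), exists f, phi X Y f = h)) /\
     (forall (X' X : RSRel) (Y Y' : Met)
             (h : RSHom X' X) (g : MetHom Y Y') (f : MetHom (P_obj X) Y),
        phi X' Y' (met_comp g (met_comp f (P_mor h)))
        = rs_comp (Q_mor g) (rs_comp (phi X Y f) h))).
Proof.
  split.
  - intros X Y. split; [apply P_mor_inj | apply P_mor_surj].
  - exists PQ_transpose. split; [| apply PQ_transpose_natural].
    intros X Y. split; [apply PQ_transpose_inj | apply PQ_transpose_surj].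
Qed.
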